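(* Suppose the family of update functions $\mathrm{Upd}$ satisfies P2. Let $\mathcal{M}=(W,\mathcal{F})$ be a measure space, $\Pr\in\Delta_{\mathcal{M}}$ and $B\in\mathcal{F}$ with $\mathrm{Upd}^{\mathcal{M}}(\Pr,B)=\emptyset$ and $\Pr(B)=\alpha<1$. Then for every measure space $\mathcal{M}'=(W',\mathcal{F}')$, every $\Pr'\in\Delta_{\mathcal{M}'}$ and every $B'\in\mathcal{F}'$ with $\Pr'(B')=\alpha$, we have $\mathrm{Upd}^{\mathcal{M}'}(\Pr',B')=\emptyset$.
   Context: A measure space is a pair $\mathcal{M}=(W,\mathcal{F})$ with $\mathcal{F}$ an algebra of subsets of $W$; $\Delta_{\mathcal{M}}$ is the set of all probability measures on $\mathcal{M}$. An update function on $\mathcal{M}$ is a map $\mathrm{Upd}^{\mathcal{M}}:2^{\Delta_{\mathcal{M}}}\times\mathcal{F}\to 2^{\Delta_{\mathcal{M}}}$ such that $\mathrm{Upd}^{\mathcal{M}}(X,B)=\emptyset$ whenever $\Pr(B)=0$ for all $\Pr\in X$; $\mathrm{Upd}^{\mathcal{M}}(\Pr,B)$ means $\mathrm{Upd}^{\mathcal{M}}(\{\Pr\},B)$. A family $\mathrm{Upd}=\{\mathrm{Upd}^{\mathcal{M}}\}$ has one update function for each measure space. A representation shift from $\mathcal{M}=(W,\mathcal{F})$ to $\mathcal{M}'=(W',\mathcal{F}')$ is a surjection $f:W\to W'$ with $f^{-1}(B)\in\mathcal{F}$ for all $B\in\mathcal{F}'$; $(f^*(\Pr))(A)=\Pr(f^{-1}(A))$,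 $f^*(X)=\{f^*(\Pr):\Pr\in X\}$. P2: for all measure spaces $\mathcal{M},\mathcal{M}'$, every representation shift $f$ from $\mathcal{M}$ to $\mathcal{M}'$, every $X\subseteq\Delta_{\mathcal{M}}$ and $B\in\mathcal{F}'$: $\mathrm{Upd}^{\mathcal{M}'}(f^*(X),B)=f^*(\mathrm{Upd}^{\mathcal{M}}(X,f^{-1}(B)))$. *)

From Stdlib Require Import Reals Lra Classical ClassicalEpsilon.
Open Scope R_scope.
Set Implicit Arguments.

Record MSpace := {
  carrier :> Type;
  meas : (carrier -> Prop) -> Prop;
  meas_T : meas (fun _ => True);
  meas_C : forall A, meas A -> meas (fun w => ~ A w);
  meas_U : forall A B, meas A -> meas B -> meas (fun w => A w \/ B w)
}.

(* A (finitely additive) probability measure on the algebra; it is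
   represented as a function on all subsets that is 0 outside F, so that
   measures are determined by their values on F. *)
Record prob (M : MSpace) := {
  pr :> (carrier M -> Prop) -> R;
  pr_out : forall A, ~ meas M A -> pr A = 0;
  pr_ge0 : forall A, meas M A -> 0 <= pr A;
  pr_T : pr (fun _ => True) = 1;
  pr_add : forall A B, meas M A -> meas M B ->
     (forall w, A w -> B w -> False) -> pr (fun w => A w \/ B w) = pr A + pr B
}.

(* A family of maps 2^{Delta_M} x F -> 2^{Delta_M}, one per measure space
   (values on non-measurable B are irrelevant). *)
Definition UpdFamily := forall M : MSpace, (prob M -> Prop) -> (carrier M -> Prop) -> (prob M -> Prop).

Definition set_empty {T} (X : T -> Prop) : Prop := forall x, ~ X x.
Definition set_eq {T} (X Y : T -> Prop) : Prop := forall x, X x <-> Y x.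
Definition single {T} (x : T) : T -> Prop := fun y => y = x.

Definition is_update_family (Upd : UpdFamily) : Prop :=
  forall (M : MSpace) (X : prob M -> Prop) (B : carrier M -> Prop), meas M B ->
    (forall P, X P -> pr P B = 0) -> set_empty (Upd M X B).

Definition preim {W W' : Type} (f : W -> W') (B : W' -> Prop) : W -> Prop :=
  fun w => B (f w).



Section Push.
Variables (M M' : MSpace) (f : carrier M -> carrier M')
  (hf : forall B, meas M' B -> meas M (preim f B)) (P : prob M).

Definition push_fun (A : carrier M' -> Prop) : R :=
  if excluded_middle_informative (meas M' A) then pr P (preim f A) else 0.

Lemma push_out : forall A, ~ meas M' A -> push_fun A = 0.
Proof. intros A h; unfold push_fun; destruct excluded_middle_informative; tauto. Qed.

Lemma push_ge0 : forall A, meas M' A -> 0 <= push_fun A.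
Proof. intros A h; unfold push_fun; destruct excluded_middle_informative.
  apply pr_ge0, hf; auto. lra. Qed.

Lemma push_T : push_fun (fun _ => True) = 1.
Proof. unfold push_fun; destruct excluded_middle_informative.
  apply (pr_T P). exfalso; apply n, meas_T. Qed.

Lemma push_add : forall A B, meas M' A -> meas M' B ->
  (forall w, A w -> B w -> False) ->
  push_fun (fun w => A w \/ B w) = push_fun A + push_fun B.
Proof. intros A B hA hB hd; unfold push_fun.
  destruct (excluded_middle_informative (meas M' (fun w => A w \/ B w))) as [h|h];
  [| exfalso; apply h, meas_U; auto].
  destruct (excluded_middle_informative (meas M' A)); [|tauto].
  destruct (excluded_middle_informative (meas M' B)); [|tauto].
  apply (pr_add P (preim f A) (preim f B)); try apply hf; auto.
  intros w; apply hd. Qed.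

Definition push : prob M' :=
  {| pr := push_fun; pr_out := push_out; pr_ge0 := push_ge0;
     pr_T := push_T; pr_add := push_add |}.
End Push.

Definition push_set (M M' : MSpace) (f : carrier M -> carrier M')
  (hf : forall B, meas M' B -> meas M (preim f B)) (X : prob M -> Prop) : prob M' -> Prop :=
  fun Q => exists P, X P /\ Q = @push M M' f hf P.

Definition P2 (Upd : UpdFamily) : Prop :=
  forall (M M' : MSpace) (f : carrier M -> carrier M')
    (fsurj : forall w', exists w, f w = w')
    (hf : forall B, meas M' B -> meas M (preim f B))
    (X : prob M -> Prop) (B : carrier M' -> Prop), meas M' B ->
    set_eq (Upd M' (@push_set M M' f hf X) B) (@push_set M M' f hf (Upd M X (preim f B))).

(* If [0 < Pr(B) < 1], the indicator of [B] is a representation shift onto the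
   two-point space with every subset measurable, and it pushes [Pr] forward to
   the Bernoulli measure of parameter [Pr(B)], sending [B] to [{true}].  By P2,
   [Upd(Pr, B)] is empty iff the update of this Bernoulli measure on [{true}]
   is empty, a condition that depends on [Pr(B)] only.  The case [Pr(B) = 0]
   is the defining property of update functions. *)
From Stdlib Require Import Reals Lra Classical ClassicalEpsilon FunctionalExtensionality PropExtensionality ProofIrrelevance.
Open Scope R_scope.

Lemma set_ext {T} (A B : T -> Prop) : (forall w, A w <-> B w) -> A = B.
Proof.
  intros h; apply functional_extensionality; intros w.
  apply propositional_extensionality; auto.
Qed.

Lemma prob_ext (M : MSpace) (p q : prob M) : (forall A, pr p A = pr q A) -> p = q.
Proof.
  destruct p as [p ? ? ? ?], q as [q ? ? ? ?]; simpl; intros h.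
  assert (p = q) by (apply functional_extensionality; auto); subst q.
  f_equal; apply proof_irrelevance.
Qed.

Definition set0 {T : Type} : T -> Prop := fun _ => False.

Lemma meas_set0 (M : MSpace) : meas M set0.
Proof.
  replace (@set0 (carrier M)) with (fun w : carrier M => ~ True)
    by (apply set_ext; unfold set0; tauto).
  apply meas_C, meas_T.
Qed.

Lemma pr_set0 (M : MSpace) (P : prob M) : pr P set0 = 0.
Proof.
  assert (h := pr_add P set0 set0 (meas_set0 M) (meas_set0 M)).
  replace (fun w => set0 w \/ set0 w) with (@set0 (carrier M)) in h
    by (apply set_ext; unfold set0; tauto).
  assert (pr P set0 = pr P set0 + pr P set0) by (apply h; unfold set0; tauto).
  lra.
Qed.

Lemma pr_compl (M : MSpace) (P : prob M) B :
  meas M B -> pr P (fun w => ~ B w) = 1 - pr P B.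
Proof.
  intros hB.
  assert (h : pr P (fun w => B w \/ ~ B w) = pr P B + pr P (fun w => ~ B w))
    by (apply pr_add; auto using meas_C).
  replace (fun w => B w \/ ~ B w) with (fun _ : carrier M => True) in h
    by (apply set_ext; intros w; split; auto using classic).
  rewrite (pr_T P) in h; lra.
Qed.

Lemma pr_gt0_inhabited (M : MSpace) (P : prob M) B : 0 < pr P B -> exists x, B x.
Proof.
  intros h; apply NNPP; intros hn.
  replace B with (@set0 (carrier M)) in h
    by (apply set_ext; intros w; unfold set0; split; [tauto | eauto]).
  rewrite pr_set0 in h; lra.
Qed.

Lemma pr_lt1_compl_inhabited (M : MSpace) (P : prob M) B :
  pr P B < 1 -> exists y, ~ B y.
Proof.
  intros h; apply NNPP; intros hn.
  replace B with (fun _ : carrier M => True) in h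
    by (apply set_ext; intros w; split; auto; intros; apply NNPP; eauto).
  rewrite (pr_T P) in h; lra.
Qed.

Lemma push_set_single (M M' : MSpace) (f : carrier M -> carrier M')
  (hf : forall B, meas M' B -> meas M (preim f B)) (P : prob M) :
  push_set f hf (single P) = single (push M' f hf P).
Proof.
  apply set_ext; intros Q; unfold push_set, single; split.
  - intros [P0 [-> ->]]; reflexivity.
  - intros ->; eauto.
Qed.

Lemma push_set_empty_iff (M M' : MSpace) (f : carrier M -> carrier M')
  (hf : forall B, meas M' B -> meas M (preim f B)) (X : prob M -> Prop) :
  set_empty (push_set f hf X) <-> set_empty X.
Proof.
  unfold set_empty, push_set; split.
  - intros h P hP; apply (h (push M' f hf P)); eauto.
  - intros h Q [P [hP _]]; exact (h P hP).
Qed.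

Lemma P2_update_empty_iff (Upd : UpdFamily) (hP2 : P2 Upd) (M M' : MSpace)
  (f : carrier M -> carrier M') (fsurj : forall w', exists w, f w = w')
  (hf : forall B, meas M' B -> meas M (preim f B))
  (X : prob M -> Prop) (B : carrier M' -> Prop) :
  meas M' B ->
  set_empty (Upd M' (push_set f hf X) B) <-> set_empty (Upd M X (preim f B)).
Proof.
  intros hB; rewrite <- (push_set_empty_iff M M' f hf (Upd M X (preim f B))).
  unfold set_empty; split; intros h Q hQ; apply (h Q), (hP2 M M' f fsurj hf X B hB), hQ.
Qed.

Definition bool_space : MSpace :=
  {| carrier := bool; meas := fun _ => True; meas_T := I;
     meas_C := fun _ _ => I; meas_U := fun _ _ _ _ => I |}.

Definition indicator {W : Type} (B : W -> Prop) (w : W) : bool :=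
  if excluded_middle_informative (B w) then true else false.

Lemma indicator_true {W} (B : W -> Prop) w : indicator B w = true <-> B w.
Proof. unfold indicator; destruct excluded_middle_informative; intuition discriminate. Qed.

Lemma indicator_false {W} (B : W -> Prop) w : indicator B w = false <-> ~ B w.
Proof. unfold indicator; destruct excluded_middle_informative; intuition discriminate. Qed.

Lemma preim_indicator_true {W} (B : W -> Prop) :
  preim (indicator B) (fun b => b = true) = B.
Proof. apply set_ext; intros w; apply indicator_true. Qed.

Lemma preim_indicator {W} (B : W -> Prop) (A : bool -> Prop) :
  (A true -> A false -> preim (indicator B) A = fun _ => True) /\
  (A true -> ~ A false -> preim (indicator B) A = B) /\
  (~ A true -> A false -> preim (indicator B) A = fun w => ~ B w) /\
  (~ A true -> ~ A false -> preim (indicator B) A = set0).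
Proof.
  unfold preim, indicator, set0; repeat split; intros h1 h2; apply set_ext; intros w;
  destruct excluded_middle_informative; tauto.
Qed.

Section IndicatorShift.
Variables (M : MSpace) (B : carrier M -> Prop) (hB : meas M B).

Lemma meas_preim_indicator :
  forall A, meas bool_space A -> meas M (preim (indicator B) A).
Proof.
  intros A _; destruct (preim_indicator B A) as [c1 [c2 [c3 c4]]].
  destruct (classic (A true)), (classic (A false)).
  - rewrite c1 by auto; apply meas_T.
  - rewrite c2 by auto; exact hB.
  - rewrite c3 by auto; apply meas_C, hB.
  - rewrite c4 by auto; apply meas_set0.
Qed.

Lemma indicator_surj (x y : carrier M) :
  B x -> ~ B y -> forall b : carrier bool_space, exists w, indicator B w = b.
Proof.
  intros hx hy [|]; [exists x; apply indicator_true | exists y; apply indicator_false]; auto.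
Qed.

Definition bernoulli_fun (alpha : R) (A : bool -> Prop) : R :=
  (if excluded_middle_informative (A true) then alpha else 0) +
  (if excluded_middle_informative (A false) then 1 - alpha else 0).

Lemma push_indicator (P : prob M) (A : bool -> Prop) :
  pr (push bool_space (indicator B) meas_preim_indicator P) A = bernoulli_fun (pr P B) A.
Proof.
  simpl; unfold push_fun; change (carrier bool_space) with bool.
  destruct excluded_middle_informative as [_ | n]; [| exfalso; apply n; exact I].
  destruct (preim_indicator B A) as [c1 [c2 [c3 c4]]]; unfold bernoulli_fun.
  do 2 destruct excluded_middle_informative.
  - rewrite c1, (pr_T P) by auto; lra.
  - rewrite c2 by auto; lra.
  - rewrite c3, pr_compl by auto; lra.
  - rewrite c4, pr_set0 by auto; lra.
Qed.

End IndicatorShift.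

Lemma push_indicator_eq (M M' : MSpace) (P : prob M) (P' : prob M')
  (B : carrier M -> Prop) (B' : carrier M' -> Prop) (hB : meas M B) (hB' : meas M' B') :
  pr P B = pr P' B' ->
  push bool_space (indicator B) (meas_preim_indicator M B hB) P =
  push bool_space (indicator B') (meas_preim_indicator M' B' hB') P'.
Proof.
  intros e; apply prob_ext; intros A; rewrite !push_indicator, e; reflexivity.
Qed.

Lemma update_empty_iff_bernoulli (Upd : UpdFamily) (hP2 : P2 Upd)
  (M : MSpace) (P : prob M) (B : carrier M -> Prop) (hB : meas M B) :
  0 < pr P B < 1 ->
  set_empty (Upd M (single P) B) <->
  set_empty (Upd bool_space
    (single (push bool_space (indicator B) (meas_preim_indicator M B hB) P))
    (fun b => b = true)).
Proof.
  intros [h0 h1].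
  destruct (pr_gt0_inhabited M P B h0) as [x hx].
  destruct (pr_lt1_compl_inhabited M P B h1) as [y hy].
  rewrite <- push_set_single,
    (P2_update_empty_iff Upd hP2 _ _ _ (indicator_surj M B x y hx hy)) by exact I.
  rewrite preim_indicator_true; reflexivity.
Qed.

Theorem lemmaA1 (Upd : UpdFamily) (hUpd : is_update_family Upd) (hP2 : P2 Upd)
  (M : MSpace) (P : prob M) (B : carrier M -> Prop) (hB : meas M B)
  (alpha : R) (hPB : pr P B = alpha) (halpha : alpha < 1)
  (hempty : set_empty (Upd M (single P) B)) :
  forall (M' : MSpace) (P' : prob M') (B' : carrier M' -> Prop),
    meas M' B' -> pr P' B' = alpha -> set_empty (Upd M' (single P') B').
Proof.
  intros M' P' B' hB' hPB'.
  assert (hge := pr_ge0 P' B' hB').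
  destruct (Req_dec alpha 0) as [a0 | a0].
  - apply hUpd; auto.
    intros Q hQ; unfold single in hQ; subst Q; lra.
  - apply (update_empty_iff_bernoulli Upd hP2 M' P' B' hB'); [lra |].
    rewrite <- (push_indicator_eq M M' P P' B B' hB hB') by congruence.
    apply (update_empty_iff_bernoulli Upd hP2 M P B hB); [lra | exact hempty].
Qed.
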